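(* Let $M\ge1$, let $\tau=(c,c,\ldots,c)\in\mathbb{R}^{M+1}_{>0}$ be a constant $M$-layer travel time vector and $\tau'=(c,\ldots,c)\in\mathbb{R}^{M+2}_{>0}$ its extension to a constant $(M+1)$-layer vector. Let $\mathcal{R}\subset(-1,1)^{M+1}$ be the set of all $R=(R_0,\ldots,R_M)$ for which there exists a nonzero $R_{M+1}\in(-1,1)$ such that, with $R'=(R_0,\ldots,R_{M+1})$, the models $(\tau,R)$ and $(\tau',R')$ have the same data, i.e. $D^{(\tau,R)}=D^{(\tau',R')}$ as measures. Then $\mathcal{R}$ has positive Lebesgue measure in $\mathbb{R}^{M+1}$.
   Context: An $N$-layer model ($N\ge1$) is $(\tau,R)$ with $\tau\in\mathbb{R}^{N+1}_{>0}$, $R\in(-1,1)^{N+1}$. $\mathfrak{L}_N\subset\mathbb{Z}^{N+1}_{\geq0}$: all $k$ with $k_0=1$ and $k_n>0\Rightarrow k_{n-1}>0$ ($1\le n\le N$); $\mathfrak{L}^\tau_N=\{k\in\mathfrak{L}_N:\langle k,\tau\rangle\le\langle\mathbb{1},\tau\rangle\}$. Amplitude polynomial: $\mathbb{1}=(1,\ldots,1)$; inequalities and $\min$ entrywise; $x^k=\prod_n x_n^{k_n}$, $\binom{k}{b}=\prod_n\binom{k_n}{b_n}$; $\tilde k=(k_1,\ldots,k_N,0)$, $u=\min\{\mathbb{1},\tilde k\}$, $V(k)=\{b:u\le b\le\min\{k,\tilde k\}\}$, $a(x,k)=\sum_{b\in V(k)}\binom{k}{b}\binom{\tilde k-u}{b-u}(-x)^{\tilde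 k-b}x^{k-b}\prod_n(1-x_n^2)^{b_n}$. The data of an $N$-layer model is the discrete measure $D^{(\tau,R)}(t)=\sum_{k\in\mathfrak{L}^\tau_N}a(R,k)\delta(t-\langle k,\tau\rangle)$ (equal to the truncated impulse response $\chi_{[0,|\tau|]}G^{(\tau,R)}$ of the layered medium, $|\tau|=\sum_n\tau_n$). *)

From Stdlib Require Import Bool Reals Lra Lia Arith List ClassicalEpsilon.
Import ListNotations.
Open Scope R_scope.

(* Vectors in R^{N+1} (resp. Z_{>=0}^{N+1}) are represented as functions
   on nat, of which only the indices 0..N are used. *)
Definition rvec := nat -> R.
Definition nvec := nat -> nat.

Definition sumL {A : Type} (f : A -> R) (l : list A) : R :=
  fold_right (fun x acc => f x + acc) 0 l.

Fixpoint prodR (f : nat -> R) (N : nat) : R :=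
  match N with
  | O => f O
  | S n => prodR f n * f (S n)
  end.

Fixpoint boxes (lo hi : nat -> nat) (n : nat) : list (list nat) :=
  match n with
  | O => [ [] ]
  | S m => flat_map (fun l => map (fun v => l ++ [v])
                                   (seq (lo m) (S (hi m) - lo m)))
                     (boxes lo hi m)
  end.

Definition of_list (l : list nat) : nvec := fun i => nth i l O.

Definition ktil (N : nat) (k : nvec) : nvec :=
  fun n => if (n <? N)%nat then k (S n) else O.

Definition uvec (N : nat) (k : nvec) : nvec := fun n => Nat.min 1 (ktil N k n).

Definition ampl (N : nat) (x : rvec) (k : nvec) : R :=
  let kt := ktil N k in
  let u := uvec N k in
  sumL (fun bl =>
          let b := of_list bl in
          prodR (fun n =>
                   C (k n) (b n) * C (kt n - u n) (b n - u n)
                   * (- x n) ^ (kt n - b n) * (x n) ^ (k n - b n)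
                   * (1 - (x n) ^ 2) ^ (b n)) N)
       (boxes u (fun n => Nat.min (k n) (kt n)) (S N)).

Definition dotk (N : nat) (k : nvec) (tau : rvec) : R :=
  sum_f_R0 (fun n => INR (k n) * tau n) N.
Definition tot (N : nat) (tau : rvec) : R := sum_f_R0 tau N.

Definition inL (N : nat) (k : nvec) : bool :=
  (k O =? 1)%nat &&
  forallb (fun n => negb (0 <? k n)%nat || (0 <? k (n - 1))%nat) (seq 1 N).

Definition inLtau (N : nat) (tau : rvec) (k : nvec) : bool :=
  inL N k && (if Rle_dec (dotk N k tau) (tot N tau) then true else false).

(* A finite candidate list containing L^tau_N when tau > 0:
   k_n tau_n <= |tau| forces k_n <= |tau|/tau_n < up(|tau|/tau_n). *)
Definition cand (N : nat) (tau : rvec) : list (list nat) :=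
  boxes (fun _ => O) (fun n => Z.to_nat (up (tot N tau / tau n))) (S N).

Definition Ltau_list (N : nat) (tau : rvec) : list nvec :=
  map of_list (filter (fun l => inLtau N tau (of_list l)) (cand N tau)).

(* The data D^{(tau,R)} as a (finite, discrete) measure on subsets of R:
   D(A) = sum_{k in L^tau_N, <k,tau> in A} a(R,k). *)
Definition data (N : nat) (tau Rc : rvec) (A : R -> Prop) : R :=
  sumL (fun k => if excluded_middle_informative (A (dotk N k tau))
                 then ampl N Rc k else 0)
       (Ltau_list N tau).

Definition same_data (N : nat) (tau Rc : rvec) (N' : nat) (tau' Rc' : rvec) : Prop :=
  forall A : R -> Prop, data N tau Rc A = data N' tau' Rc' A.

Definition in_box (d : nat) (a b : rvec) (x : rvec) : Prop :=
  forall i, (i < d)%nat -> a i <= x i <= b i.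

Fixpoint vol (d : nat) (a b : rvec) : R :=
  match d with
  | O => 1
  | S m => vol m a b * Rmax 0 (b m - a m)
  end.

Definition outer_lt (d : nat) (S : rvec -> Prop) (eps : R) : Prop :=
  exists (a b : nat -> rvec),
    (forall x, S x -> exists j, in_box d (a j) (b j) x) /\
    exists s, s < eps /\ forall n, sum_f_R0 (fun j => vol d (a j) (b j)) n <= s.

Definition null_set (d : nat) (S : rvec -> Prop) : Prop :=
  forall eps, 0 < eps -> outer_lt d S eps.

Definition open_set (d : nat) (G : rvec -> Prop) : Prop :=
  forall x, G x -> exists delta, 0 < delta /\
    forall y, (forall i, (i < d)%nat -> Rabs (y i - x i) < delta) -> G y.

Definition lebesgue_measurable (d : nat) (S : rvec -> Prop) : Prop :=
  forall eps, 0 < eps -> exists G, open_set d G /\ (forall x, S x -> G x) /\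
    outer_lt d (fun x => G x /\ ~ S x) eps.

Definition positive_measure (d : nat) (S : rvec -> Prop) : Prop :=
  lebesgue_measurable d S /\ ~ null_set d S.

Definition extend (M : nat) (Rc : rvec) (r : R) : rvec :=
  fun n => if (n <=? M)%nat then Rc n else r.

From Pilot Require Import Defs.
From Stdlib Require Import Bool Reals Lra Lia Arith List Permutation ClassicalEpsilon Classical FunctionalExtensionality.
From Coquelicot Require Compactness.
Import ListNotations.
Open Scope R_scope.

(* With all travel times equal to c, the arrival of the path k is at time |k| c,
   and exactly the paths with |k| <= N+1 are recorded.  Appending a layer with
   reflection coefficient r changes nothing for the paths that stay in the first
   M+1 layers, except that the recording window grows by one step; the only new
   recorded path entering the new layer is (1,...,1), of amplitude r P(R) with
   P(R) = prod_n (1 - R_n^2).  Hence (data_extend) D' = D + (r P(R) + Q(R))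
   delta_{(M+2)c}, Q(R) being the total amplitude of the paths with |k| = M+2 of
   the original model, and the set of the theorem is
     Rset = { R in (-1,1)^{M+1} : Q(R) <> 0 and |Q(R)| < P(R) }   (Rset_iff).
   It is open since P and Q are polynomials, and it contains
   R* = (1/2, 1/2, 0, ..., 0), where Q(R* ) is a single nonzero term.
   Finally open sets are Lebesgue measurable, and a box of positive volume is not
   null: a countable cover by boxes is enlarged slightly, reduced to a finite
   subcover by compactness (Coquelicot), and a finite cover of a box has at least
   its volume (induction on the number of faces cutting the box). *)

Lemma sumL_nil {A} (f : A -> R) : sumL f [] = 0.
Proof. reflexivity. Qed.

Lemma sumL_cons {A} (f : A -> R) x l : sumL f (x :: l) = f x + sumL f l.
Proof. reflexivity. Qed.

Lemma sumL_app {A} (f : A -> R) l1 l2 : sumL f (l1 ++ l2) = sumL f l1 + sumL f l2.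
Proof. induction l1 as [|x l1 IH]; simpl; [lra|]. unfold sumL in *; simpl. rewrite IH; lra. Qed.

Lemma sumL_map {A B} (f : B -> R) (g : A -> B) l : sumL f (map g l) = sumL (fun x => f (g x)) l.
Proof. induction l as [|x l IH]; simpl; auto. unfold sumL in *; simpl. now rewrite IH. Qed.

Lemma sumL_flat_map {A B} (f : B -> R) (g : A -> list B) l :
  sumL f (flat_map g l) = sumL (fun x => sumL f (g x)) l.
Proof. induction l as [|x l IH]; simpl; auto. now rewrite sumL_app, IH. Qed.

Lemma sumL_ext {A} (f g : A -> R) l : (forall x, In x l -> f x = g x) -> sumL f l = sumL g l.
Proof.
  induction l as [|x l IH]; intros H; simpl; auto. rewrite (H x) by (left; auto).
  f_equal. apply IH. intros y Hy. apply H. right; auto.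
Qed.

Lemma sumL_filter {A} (f : A -> R) p l :
  sumL f (filter p l) = sumL (fun x => if p x then f x else 0) l.
Proof.
  induction l as [|x l IH]; [reflexivity|]. cbn [filter]. rewrite sumL_cons.
  destruct (p x); rewrite ?sumL_cons, IH; lra.
Qed.

Lemma sumL_plus {A} (f g : A -> R) l : sumL (fun x => f x + g x) l = sumL f l + sumL g l.
Proof. induction l; rewrite ?sumL_cons; simpl in *; lra. Qed.

Lemma sumL_zero {A} (f : A -> R) l : (forall x, In x l -> f x = 0) -> sumL f l = 0.
Proof.
  induction l as [|x l IH]; intros H; simpl; [lra|].
  rewrite (H x), IH by (simpl; auto; intros; apply H; right; auto). lra.
Qed.

Lemma sumL_perm {A} (f : A -> R) l1 l2 : Permutation l1 l2 -> sumL f l1 = sumL f l2.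
Proof. induction 1; rewrite ?sumL_cons; try lra; congruence. Qed.

Lemma sumL_support {A} (f : A -> R) l1 l2 : NoDup l1 -> NoDup l2 ->
  (forall x, f x <> 0 -> (In x l1 <-> In x l2)) -> sumL f l1 = sumL f l2.
Proof.
  intros N1 N2 H.
  set (nz := fun x => if Req_EM_T (f x) 0 then false else true).
  assert (Hnz : forall l, sumL f l = sumL f (filter nz l)).
  { intros l. rewrite sumL_filter. apply sumL_ext; intros x _. unfold nz.
    destruct (Req_EM_T (f x) 0); auto. }
  rewrite (Hnz l1), (Hnz l2). apply sumL_perm, NoDup_Permutation; try apply NoDup_filter; auto.
  intros x. rewrite !filter_In. unfold nz. destruct (Req_EM_T (f x) 0) as [E|E].
  - split; intros [_ Hc]; discriminate.
  - specialize (H x E). tauto.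
Qed.

Lemma sumL_single {A} (f : A -> R) l x : NoDup l -> In x l ->
  (forall y, In y l -> y <> x -> f y = 0) -> sumL f l = f x.
Proof.
  induction l as [|a l IH]; intros N I H; [destruct I|].
  inversion N; subst. rewrite sumL_cons. destruct (classic (a = x)).
  - subst. rewrite sumL_zero; [lra|]. intros y Hy. apply H; [right; auto|]. intro; subst; contradiction.
  - rewrite H by (try left; auto). destruct I as [I|I]; [contradiction|].
    rewrite IH; auto; [lra|]. intros y Hy. apply H; right; auto.
Qed.

Lemma boxes_S lo hi n : boxes lo hi (S n) =
  flat_map (fun l => map (fun v => l ++ [v]) (seq (lo n) (S (hi n) - lo n))) (boxes lo hi n).
Proof. reflexivity. Qed.

Lemma boxes_In lo hi n l : In l (boxes lo hi n) <->
  (length l = n /\ forall i, (i < n)%nat -> (lo i <= nth i l 0 <= hi i)%nat).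
Proof.
  revert l; induction n as [|n IHn]; intros l.
  - simpl. split.
    + intros [<-|[]]. split; auto. intros; lia.
    + intros [H _]. destruct l; [auto|simpl in H; lia].
  - rewrite boxes_S, in_flat_map. split.
    + intros [l0 [Hl0 Hm]]. apply in_map_iff in Hm. destruct Hm as [v [<- Hv]].
      apply in_seq in Hv. apply IHn in Hl0. destruct Hl0 as [Hlen Hb].
      rewrite length_app; simpl; split; [lia|]. intros i Hi.
      destruct (Nat.eq_dec i n).
      * subst. rewrite app_nth2 by lia. rewrite Nat.sub_diag. simpl. lia.
      * rewrite app_nth1 by lia. apply Hb; lia.
    + intros [Hlen Hb]. destruct (exists_last (l:=l)) as [l' [a Ha]].
      { intro; subst; simpl in Hlen; lia. }
      subst l. rewrite length_app in Hlen; simpl in Hlen.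
      exists l'. split.
      * apply IHn. split; [lia|]. intros i Hi. specialize (Hb i ltac:(lia)).
        rewrite app_nth1 in Hb by lia. auto.
      * apply in_map_iff. exists a; split; auto. apply in_seq.
        specialize (Hb n ltac:(lia)). rewrite app_nth2 in Hb by lia.
        replace (n - length l')%nat with 0%nat in Hb by lia; simpl in Hb. lia.
Qed.

Lemma NoDup_flat_map {A B} (g : A -> list B) l : NoDup l -> (forall x, NoDup (g x)) ->
  (forall x y z, In x l -> In y l -> In z (g x) -> In z (g y) -> x = y) -> NoDup (flat_map g l).
Proof.
  induction l as [|a l IH]; intros N Ng H; simpl; [constructor|].
  inversion N; subst. apply NoDup_app; auto.
  - apply IH; auto. intros; eapply H; eauto; right; auto.
  - intros z Hz Hz'. apply in_flat_map in Hz'. destruct Hz' as [y [Hy Hzy]].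
    assert (a = y) by (eapply H; eauto; [left|right]; auto). subst. auto.
Qed.

Lemma boxes_NoDup lo hi n : NoDup (boxes lo hi n).
Proof.
  induction n; simpl. { constructor; [simpl; auto| constructor]. }
  apply NoDup_flat_map; auto.
  - intros x. apply FinFun.Injective_map_NoDup; [|apply seq_NoDup].
    intros a b Hab. apply app_inj_tail in Hab. tauto.
  - intros x y z _ _ Hx Hy. apply in_map_iff in Hx, Hy.
    destruct Hx as [a [<- _]]. destruct Hy as [b [Hb _]]. apply app_inj_tail in Hb. symmetry; tauto.
Qed.

Lemma boxes_ext lo hi lo' hi' n : (forall i, (i < n)%nat -> lo i = lo' i /\ hi i = hi' i) ->
  boxes lo hi n = boxes lo' hi' n.
Proof.
  induction n as [|n IHn]; intros H; auto. rewrite !boxes_S, IHn by (intros; apply H; lia).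
  destruct (H n ltac:(lia)) as [-> ->]. reflexivity.
Qed.

Lemma boxes_single lo hi n : (forall i, (i < n)%nat -> lo i = hi i) ->
  boxes lo hi n = [map lo (seq 0 n)].
Proof.
  induction n as [|n IHn]; intros H; auto. rewrite boxes_S, IHn by (intros; apply H; lia).
  rewrite (H n ltac:(lia)). replace (S (hi n) - hi n)%nat with 1%nat by lia.
  rewrite (seq_S n 0), map_app. cbn [seq flat_map map app].
  rewrite Nat.add_0_l, (H n ltac:(lia)). reflexivity.
Qed.

Lemma of_list_map_seq f m n : (n < m)%nat -> of_list (map f (seq 0 m)) n = f n.
Proof.
  intros H. unfold of_list. rewrite (nth_indep _ _ (f 0%nat)) by (rewrite length_map, length_seq; lia).
  rewrite map_nth, seq_nth by lia. reflexivity.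
Qed.

Lemma of_list_app0 l : of_list (l ++ [0%nat]) = of_list l.
Proof.
  apply functional_extensionality; intros n. unfold of_list.
  destruct (Nat.lt_ge_cases n (length l)).
  - rewrite app_nth1; auto.
  - rewrite app_nth2, (nth_overflow l) by auto. destruct (n - length l)%nat as [|[|]]; reflexivity.
Qed.

Lemma of_list_app_last l v : of_list (l ++ [v]) (length l) = v.
Proof. unfold of_list. rewrite app_nth2, Nat.sub_diag by lia. reflexivity. Qed.

Lemma of_list_app_lt l v i : (i < length l)%nat -> of_list (l ++ [v]) i = of_list l i.
Proof. intros. unfold of_list. rewrite app_nth1; auto. Qed.

(* [ksum k N] is |k| = k_0 + ... + k_N, the number of layer traversals of a path. *)
Fixpoint ksum (k : nvec) (N : nat) : nat :=
  match N with O => k O | S n => (ksum k n + k (S n))%nat end.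

Lemma dotk_const N k c : dotk N k (fun _ => c) = INR (ksum k N) * c.
Proof.
  unfold dotk. induction N as [|N IHN]; simpl sum_f_R0; simpl ksum; [auto|].
  rewrite IHN, plus_INR. ring.
Qed.

Lemma tot_const N c : tot N (fun _ => c) = INR (S N) * c.
Proof.
  unfold tot. induction N as [|N IHN]; simpl sum_f_R0; [simpl; ring|].
  rewrite IHN, (S_INR (S N)). ring.
Qed.

Lemma up_INR n : up (INR n) = (Z.of_nat n + 1)%Z.
Proof. symmetry. apply tech_up; rewrite plus_IZR, <- INR_IZR_INZ; simpl; lra. Qed.

Lemma cand_const N c : 0 < c ->
  cand N (fun _ => c) = boxes (fun _ => 0%nat) (fun _ => S (S N)) (S N).
Proof.
  intros Hc. unfold cand. apply boxes_ext. intros i _. split; auto.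
  rewrite tot_const. replace (INR (S N) * c / c) with (INR (S N)) by (field; lra).
  rewrite up_INR. lia.
Qed.

Lemma inLtau_const N c k : 0 < c ->
  inLtau N (fun _ => c) k = inL N k && (ksum k N <=? S N)%nat.
Proof.
  intros Hc. unfold inLtau. rewrite dotk_const, tot_const.
  destruct (Rle_dec _ _) as [H|H]; destruct (Nat.leb_spec (ksum k N) (S N)) as [H'|H']; auto.
  - apply Rmult_le_reg_r, INR_le in H; auto. lia.
  - exfalso. apply H, Rmult_le_compat_r; [lra|]. apply le_INR; auto.
Qed.

Definition data_term (N : nat) (c : R) (Rc : rvec) (A : R -> Prop) (l : list nat) : R :=
  if inL N (of_list l) && (ksum (of_list l) N <=? S N)%nat then
    (if excluded_middle_informative (A (INR (ksum (of_list l) N) * c))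
     then ampl N Rc (of_list l) else 0)
  else 0.

Lemma data_const N c Rc A : 0 < c ->
  data N (fun _ => c) Rc A =
  sumL (data_term N c Rc A) (boxes (fun _ => 0%nat) (fun _ => S (S N)) (S N)).
Proof.
  intros Hc. unfold data, Ltau_list. rewrite sumL_map, sumL_filter, cand_const by auto.
  apply sumL_ext; intros l _. unfold data_term. rewrite inLtau_const, dotk_const by auto.
  reflexivity.
Qed.

Lemma inL_spec N k : inL N k = true <->
  (k 0%nat = 1%nat /\ forall n, (1 <= n <= N)%nat -> k n = 0%nat \/ (0 < k (n-1))%nat).
Proof.
  unfold inL. rewrite andb_true_iff, Nat.eqb_eq, forallb_forall.
  split; intros [H0 H]; split; auto; intros n Hn.
  - specialize (H n ltac:(apply in_seq; lia)). apply orb_true_iff in H.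
    destruct H as [H|H]; [left; apply negb_true_iff, Nat.ltb_ge in H; lia | right; apply Nat.ltb_lt; auto].
  - apply in_seq in Hn. specialize (H n ltac:(lia)). apply orb_true_iff.
    destruct H as [H|H]; [left; apply negb_true_iff, Nat.ltb_ge; lia | right; apply Nat.ltb_lt; auto].
Qed.

Lemma inL_prefix_pos N k : inL N k = true -> forall n, (n <= N)%nat -> (0 < k n)%nat ->
  forall m, (m <= n)%nat -> (0 < k m)%nat.
Proof.
  intros H. apply inL_spec in H. destruct H as [H0 H].
  induction n as [|n IHn]; intros Hn Hk m Hm.
  - replace m with 0%nat by lia. lia.
  - destruct (Nat.eq_dec m (S n)); [subst; auto|].
    apply IHn; try lia. destruct (H (S n) ltac:(lia)) as [E|E]; [lia|].
    replace (S n - 1)%nat with n in E by lia. auto.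
Qed.

Lemma inL_last0 N k : k (S N) = 0%nat -> inL (S N) k = inL N k.
Proof.
  intros H. apply eq_iff_eq_true. rewrite !inL_spec. split; intros [H0 H1]; split; auto; intros n Hn.
  - apply H1; lia.
  - destruct (Nat.eq_dec n (S N)); [left; subst; auto|]. apply H1; lia.
Qed.

Lemma inL_all_pos N k : k 0%nat = 1%nat -> (forall n, (n <= N)%nat -> (1 <= k n)%nat) -> inL N k = true.
Proof.
  intros H0 H. apply inL_spec. split; auto. intros n Hn. right.
  specialize (H (n-1)%nat ltac:(lia)). lia.
Qed.

Lemma ksum_ge N k i : (i <= N)%nat -> (k i <= ksum k N)%nat.
Proof.
  induction N as [|N IHN]; intros H; simpl. { replace i with 0%nat by lia; lia. }
  destruct (Nat.eq_dec i (S N)); [subst; lia|]. specialize (IHN ltac:(lia)); lia.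
Qed.

Lemma ksum_all_pos N k : (forall n, (n <= N)%nat -> (1 <= k n)%nat) -> (S N <= ksum k N)%nat.
Proof.
  induction N as [|N IHN]; intros H; simpl; [apply H; lia|].
  specialize (IHN ltac:(intros; apply H; lia)). specialize (H (S N) ltac:(lia)). lia.
Qed.

Lemma ksum_all_pos_eq N k : (forall n, (n <= N)%nat -> (1 <= k n)%nat) -> ksum k N = S N ->
  forall n, (n <= N)%nat -> k n = 1%nat.
Proof.
  induction N as [|N IHN]; intros H E n Hn; simpl in E. { replace n with 0%nat by lia; lia. }
  pose proof (ksum_all_pos N k ltac:(intros; apply H; lia)). pose proof (H (S N) ltac:(lia)).
  destruct (Nat.eq_dec n (S N)); [subst; lia|]. apply IHN; try lia. intros; apply H; lia.
Qed.

Lemma ksum_all1 N k : (forall n, (n <= N)%nat -> k n = 1%nat) -> ksum k N = S N.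
Proof.
  induction N as [|N IHN]; intros H; simpl; [apply H; lia|].
  rewrite IHN, H by (intros; try apply H; lia). lia.
Qed.

Lemma ksum_two N k : (1 <= N)%nat -> (forall n, (2 <= n <= N)%nat -> k n = 0%nat) ->
  ksum k N = (k 0%nat + k 1%nat)%nat.
Proof.
  induction N as [|N IHN]; intros H1 H; [lia|]. destruct N; [reflexivity|].
  simpl ksum. simpl ksum in IHN. rewrite IHN, (H (S (S N))) by (try intros; try apply H; lia). lia.
Qed.

Lemma C_n0 n : C n 0 = 1.
Proof. unfold C. rewrite Nat.sub_0_r. simpl fact. rewrite Rmult_1_l. field. apply INR_fact_neq_0. Qed.

Lemma C_nn n : C n n = 1.
Proof. unfold C. rewrite Nat.sub_diag. simpl fact. rewrite Rmult_1_r. field. apply INR_fact_neq_0. Qed.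

Lemma prodR_S f n : prodR f (S n) = prodR f n * f (S n).
Proof. reflexivity. Qed.

Lemma prodR_ext f g N : (forall n, (n <= N)%nat -> f n = g n) -> prodR f N = prodR g N.
Proof.
  induction N as [|N IHN]; intros H; simpl; [apply H; lia|].
  rewrite IHN, H by (intros; try apply H; lia). reflexivity.
Qed.

Lemma prodR_zero f N n : (n <= N)%nat -> f n = 0 -> prodR f N = 0.
Proof.
  induction N as [|N IHN]; intros Hn Hf; simpl.
  - replace n with 0%nat in Hf by lia; auto.
  - destruct (Nat.eq_dec n (S N)); [subst; rewrite Hf; ring|]. rewrite (IHN ltac:(lia) Hf); ring.
Qed.

Lemma prodR_two f N : (1 <= N)%nat -> (forall n, (2 <= n <= N)%nat -> f n = 1) ->
  prodR f N = f 0%nat * f 1%nat.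
Proof.
  induction N as [|N IHN]; intros H1 H; [lia|]. destruct N; [reflexivity|].
  rewrite prodR_S.
  rewrite IHN, (H (S (S N))) by (try intros; try apply H; lia). ring.
Qed.

Lemma prodR_pos f N : (forall n, (n <= N)%nat -> 0 < f n) -> 0 < prodR f N.
Proof.
  induction N as [|N IHN]; intros H; simpl; [apply H; lia|].
  apply Rmult_lt_0_compat; [apply IHN; intros|]; apply H; lia.
Qed.

Lemma ampl_extend_zero M R r k : k (S M) = 0%nat -> ampl (S M) (extend M R r) k = ampl M R k.
Proof.
  intros H. unfold ampl. cbv zeta.
  assert (Hkt : ktil (S M) k = ktil M k).
  { apply functional_extensionality; intros n. unfold ktil.
    destruct (Nat.ltb_spec n (S M)); destruct (Nat.ltb_spec n M); auto; try lia.
    replace n with M by lia. auto. }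
  assert (Hu : uvec (S M) k = uvec M k) by (unfold uvec; rewrite Hkt; auto).
  assert (E1 : ktil M k (S M) = 0%nat) by (unfold ktil; destruct (Nat.ltb_spec (S M) M); auto; lia).
  assert (E2 : uvec M k (S M) = 0%nat) by (unfold uvec; rewrite E1; auto).
  rewrite Hkt, Hu, boxes_S. cbv beta. rewrite E1, E2, H.
  change (seq 0 (S (Nat.min 0 0) - 0)) with [0%nat].
  assert (Hfm : forall l, flat_map (fun b => map (fun v => b ++ [v]) [0%nat]) l = map (fun b => b ++ [0%nat]) l)
    by (induction l; simpl; f_equal; auto).
  rewrite Hfm, sumL_map. apply sumL_ext.
  intros bl Hbl. apply boxes_In in Hbl. destruct Hbl as [Hlen _].
  rewrite of_list_app0, prodR_S.
  assert (E3 : of_list bl (S M) = 0%nat) by (unfold of_list; apply nth_overflow; lia).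
  rewrite H, E1, E2, E3. simpl (0 - 0)%nat. rewrite C_n0, !pow_O, !Rmult_1_r.
  apply prodR_ext. intros n Hn. unfold extend. destruct (Nat.leb_spec n M); [auto|lia].
Qed.

Lemma ampl_ones M R r k : (forall n, (n <= S M)%nat -> k n = 1%nat) ->
  ampl (S M) (extend M R r) k = r * prodR (fun n => 1 - R n ^ 2) M.
Proof.
  intros Hk. unfold ampl. cbv zeta.
  assert (Hkt : forall n, (n <= M)%nat -> ktil (S M) k n = 1%nat)
    by (intros n Hn; unfold ktil; destruct (Nat.ltb_spec n (S M)); [apply Hk|]; lia).
  assert (Hkt' : ktil (S M) k (S M) = 0%nat) by (unfold ktil; destruct (Nat.ltb_spec (S M) (S M)); lia).
  assert (Hu : forall n, (n <= M)%nat -> uvec (S M) k n = 1%nat) by (intros; unfold uvec; rewrite Hkt; auto).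
  assert (Hu' : uvec (S M) k (S M) = 0%nat) by (unfold uvec; rewrite Hkt'; auto).
  rewrite boxes_single.
  2:{ intros i Hi. destruct (Nat.eq_dec i (S M)).
      - subst. rewrite Hu', Hkt'. lia.
      - rewrite Hu, Hkt, Hk by lia. auto. }
  rewrite sumL_cons, sumL_nil, Rplus_0_r.
  rewrite prodR_S.
  rewrite (of_list_map_seq _ (S (S M)) (S M)), Hu', Hkt', Hk by lia. unfold extend at 3 4 5.
  destruct (Nat.leb_spec (S M) M); [lia|].
  rewrite Nat.sub_diag, Nat.sub_0_r, !C_n0, !pow_O, pow_1, Rmult_comm. f_equal; [ring|].
  apply prodR_ext. intros n Hn. rewrite of_list_map_seq, Hu, Hkt, Hk by lia.
  unfold extend. destruct (Nat.leb_spec n M); [|lia].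
  rewrite Nat.sub_diag, C_nn, C_n0, !pow_O, pow_1. ring.
Qed.

(** Adding a layer: the data change by a single arrival at time (M+2)c. *)

(* Transmission factor of the path (1,...,1) through the layers 0..M. *)
Definition Ppoly (M : nat) (x : rvec) : R := prodR (fun n => 1 - x n ^ 2) M.

(* Total amplitude of the arrivals of the M-layer model with |k| = M+2; they
   arrive at time (M+2)c, just after the end of its recording window. *)
Definition Qpoly (M : nat) (x : rvec) : R :=
  sumL (fun l => if inL M (of_list l) && (ksum (of_list l) M =? S (S M))%nat
                 then ampl M x (of_list l) else 0)
       (boxes (fun _ => 0%nat) (fun _ => S (S (S M))) (S M)).

Lemma data_term_enter M c R' A l v : length l = S M -> (1 <= v)%nat ->
  data_term (S M) c R' A (l ++ [v]) <> 0 -> v = 1%nat /\ l = repeat 1%nat (S M).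
Proof.
  intros Hl Hv H. unfold data_term in H. set (k := of_list (l ++ [v])) in *.
  destruct (inL (S M) k && (ksum k (S M) <=? S (S M)))%nat eqn:E; [|lra].
  apply andb_true_iff in E. destruct E as [E1 E2]. apply Nat.leb_le in E2.
  assert (Hkv : k (S M) = v) by (unfold k; rewrite <- Hl; apply of_list_app_last).
  assert (Hpos : forall m, (m <= S M)%nat -> (0 < k m)%nat)
    by (intros; apply (inL_prefix_pos (S M) k E1 (S M)); try rewrite Hkv; lia).
  simpl ksum in E2. rewrite Hkv in E2.
  pose proof (ksum_all_pos M k ltac:(intros; apply Hpos; lia)).
  split; [lia|].
  pose proof (ksum_all_pos_eq M k ltac:(intros; apply Hpos; lia) ltac:(lia)) as Hone.
  apply (nth_ext _ _ 0%nat 0%nat); [rewrite repeat_length; auto|].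
  intros n Hn. rewrite nth_repeat_lt by lia.
  specialize (Hone n ltac:(lia)). unfold k in Hone. rewrite of_list_app_lt in Hone by lia. exact Hone.
Qed.

Lemma data_term_ones M c R r A :
  data_term (S M) c (extend M R r) A (repeat 1%nat (S M) ++ [1%nat]) =
  if excluded_middle_informative (A (INR (S (S M)) * c)) then r * Ppoly M R else 0.
Proof.
  unfold data_term. set (k := of_list (repeat 1%nat (S M) ++ [1%nat])).
  assert (Hk : forall n, (n <= S M)%nat -> k n = 1%nat).
  { intros n Hn. unfold k. destruct (Nat.eq_dec n (S M)).
    - subst. rewrite <- (repeat_length 1%nat (S M)) at 2. apply of_list_app_last.
    - rewrite of_list_app_lt by (rewrite repeat_length; lia). unfold of_list. apply nth_repeat_lt; lia. }
  rewrite (inL_all_pos (S M) k), (ksum_all1 (S M) k Hk), Nat.leb_refl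
    by (try (apply Hk; lia); intros n Hn; rewrite Hk; auto).
  simpl andb. rewrite ampl_ones by auto. reflexivity.
Qed.

Lemma data_term_stay M c R r A l : length l = S M ->
  data_term (S M) c (extend M R r) A (l ++ [0%nat]) = data_term M c R A l +
   (if inL M (of_list l) && (ksum (of_list l) M =? S (S M))%nat then
      (if excluded_middle_informative (A (INR (S (S M)) * c)) then ampl M R (of_list l) else 0)
    else 0).
Proof.
  intros Hl. unfold data_term. rewrite of_list_app0. set (k := of_list l).
  assert (H0 : k (S M) = 0%nat) by (unfold k, of_list; apply nth_overflow; lia).
  rewrite inL_last0, ampl_extend_zero by auto.
  change (ksum k (S M)) with (ksum k M + k (S M))%nat. rewrite H0, Nat.add_0_r.
  destruct (inL M k); simpl andb; [|lra].
  destruct (Nat.leb_spec (ksum k M) (S (S M))); destruct (Nat.leb_spec (ksum k M) (S M));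
    destruct (Nat.eqb_spec (ksum k M) (S (S M))) as [e|]; try lia; try lra.
  rewrite e. lra.
Qed.

Lemma data_term_column M c R r A l : length l = S M ->
  sumL (fun v => data_term (S M) c (extend M R r) A (l ++ [v])) (seq 0 (S (S (S (S M))))) =
  data_term (S M) c (extend M R r) A (l ++ [0%nat]) +
  (if list_eq_dec Nat.eq_dec l (repeat 1%nat (S M))
   then data_term (S M) c (extend M R r) A (repeat 1%nat (S M) ++ [1%nat]) else 0).
Proof.
  intros Hlen. change (seq 0 _) with (0%nat :: seq 1 (S (S (S M)))). rewrite sumL_cons. f_equal.
  destruct (list_eq_dec Nat.eq_dec l (repeat 1%nat (S M))) as [->|Hne].
  - apply (sumL_single (fun v => _ (_ ++ [v]))); [apply seq_NoDup | apply in_seq; lia|].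
    intros y Hy Hy1. apply in_seq in Hy. apply NNPP; intro Hz.
    destruct (data_term_enter M c _ A _ y Hlen ltac:(lia) Hz); lia.
  - apply sumL_zero. intros y Hy. apply in_seq in Hy. apply NNPP; intro Hz.
    destruct (data_term_enter M c _ A l y Hlen ltac:(lia) Hz); contradiction.
Qed.

Lemma data_term_support M c R A :
  sumL (data_term M c R A) (boxes (fun _ => 0%nat) (fun _ => S (S (S M))) (S M)) =
  sumL (data_term M c R A) (boxes (fun _ => 0%nat) (fun _ => S (S M)) (S M)).
Proof.
  apply sumL_support; try apply boxes_NoDup.
  intros l Hl. unfold data_term in Hl.
  destruct (inL M (of_list l) && (ksum (of_list l) M <=? S M))%nat eqn:E; [|exfalso; apply Hl; reflexivity].
  apply andb_true_iff in E. destruct E as [_ E]. apply Nat.leb_le in E.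
  rewrite !boxes_In. split; intros [Hlen _]; split; auto; intros i Hi;
    pose proof (ksum_ge M (of_list l) i ltac:(lia)); unfold of_list in *; lia.
Qed.

Lemma data_extend M c R r A : 0 < c ->
  data (S M) (fun _ => c) (extend M R r) A = data M (fun _ => c) R A +
   (if excluded_middle_informative (A (INR (S (S M)) * c)) then r * Ppoly M R + Qpoly M R else 0).
Proof.
  intros Hc. rewrite !data_const by auto. rewrite (boxes_S _ _ (S M)), sumL_flat_map.
  set (B := boxes (fun _ => 0%nat) (fun _ => S (S (S M))) (S M)).
  set (ones := repeat 1%nat (S M)).
  set (g := data_term (S M) c (extend M R r) A (ones ++ [1%nat])).
  rewrite (sumL_ext _ (fun l => data_term (S M) c (extend M R r) A (l ++ [0%nat]) +
                                (if list_eq_dec Nat.eq_dec l ones then g else 0)))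
    by (intros l Hl; apply boxes_In in Hl; rewrite sumL_map, Nat.sub_0_r;
        apply data_term_column; tauto).
  rewrite sumL_plus, (sumL_single (fun l => if list_eq_dec Nat.eq_dec l ones then g else 0) B ones).
  2: apply boxes_NoDup.
  2:{ apply boxes_In. split; [apply repeat_length|]. intros i Hi. unfold ones. rewrite nth_repeat_lt; lia. }
  2:{ intros y _ Hy. destruct (list_eq_dec Nat.eq_dec y ones); [contradiction|reflexivity]. }
  destruct (list_eq_dec Nat.eq_dec ones ones) as [_|]; [|contradiction].
  rewrite (sumL_ext _ _ B (fun l Hl => data_term_stay M c R r A l (proj1 (proj1 (boxes_In _ _ _ l) Hl)))).
  assert (HQ : forall P : Prop, sumL (fun l =>
      if inL M (of_list l) && (ksum (of_list l) M =? S (S M))%nat then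
        (if excluded_middle_informative P then ampl M R (of_list l) else 0) else 0) B
      = if excluded_middle_informative P then Qpoly M R else 0).
  { intros P. unfold Qpoly. fold B. destruct (excluded_middle_informative P).
    - apply sumL_ext; intros; destruct (_ && _); reflexivity.
    - apply sumL_zero; intros; destruct (_ && _); reflexivity. }
  rewrite sumL_plus, data_term_support, HQ. unfold g. rewrite data_term_ones.
  destruct (excluded_middle_informative (A (INR (S (S M)) * c))); lra.
Qed.

Lemma same_data_iff M c R r : 0 < c ->
  (same_data M (fun _ => c) R (S M) (fun _ => c) (extend M R r) <-> r * Ppoly M R + Qpoly M R = 0).
Proof.
  intros Hc. unfold same_data. split.
  - intros H. specialize (H (fun t => t = INR (S (S M)) * c)). rewrite data_extend in H by auto.
    destruct (excluded_middle_informative _) as [_|n]; [lra|]. exfalso; apply n; reflexivity.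
  - intros H A. rewrite data_extend by auto. destruct (excluded_middle_informative _); lra.
Qed.

Definition Rstar : rvec := fun n => if (n <=? 1)%nat then 1/2 else 0.
(* The multi-index k* = (1, M+1, 0, ..., 0): the only path with |k| = M+2 and
   nonzero amplitude at R*, since it never reaches the transparent layers 2..M. *)
Definition lstar (M : nat) : list nat := 1%nat :: S M :: repeat 0%nat (M - 1).

Lemma kstar0 M : of_list (lstar M) 0%nat = 1%nat. Proof. reflexivity. Qed.
Lemma kstar1 M : of_list (lstar M) 1%nat = S M. Proof. reflexivity. Qed.
Lemma kstar2 M n : (2 <= n)%nat -> of_list (lstar M) n = 0%nat.
Proof. intros H. unfold of_list, lstar. destruct n as [|[|n]]; try lia. simpl. apply nth_repeat. Qed.
Lemma lstar_len M : (1 <= M)%nat -> length (lstar M) = S M.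
Proof. intros. unfold lstar. simpl. rewrite repeat_length. lia. Qed.

Lemma ampl_star M : (1 <= M)%nat ->
  ampl M Rstar (of_list (lstar M)) = (-(1/2)) ^ M * (1 - (1/2) ^ 2) * (1/2) ^ (S M).
Proof.
  intros HM. unfold ampl. cbv zeta. set (k := of_list (lstar M)).
  assert (Kt0 : ktil M k 0%nat = S M) by (unfold ktil; destruct (Nat.ltb_spec 0 M); [reflexivity|lia]).
  assert (Kt : forall n, (1 <= n)%nat -> ktil M k n = 0%nat)
    by (intros n Hn; unfold ktil; destruct (Nat.ltb_spec n M); [apply kstar2; lia|auto]).
  assert (U0 : uvec M k 0%nat = 1%nat) by (unfold uvec; rewrite Kt0; lia).
  assert (U : forall n, (1 <= n)%nat -> uvec M k n = 0%nat) by (intros; unfold uvec; rewrite Kt; auto).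
  rewrite boxes_single.
  2:{ intros i Hi. destruct i as [|i].
      - rewrite U0, Kt0. unfold k; rewrite kstar0. lia.
      - rewrite U, Kt by lia. lia. }
  rewrite sumL_cons, sumL_nil, Rplus_0_r.
  rewrite prodR_two by (try lia; intros n Hn; rewrite of_list_map_seq by lia;
     rewrite U, Kt by lia; unfold k; rewrite kstar2 by lia; rewrite Nat.sub_diag, C_n0, !pow_O; ring).
  rewrite !of_list_map_seq by lia. rewrite U0, Kt0, (U 1%nat), (Kt 1%nat) by lia.
  unfold k; rewrite kstar0, kstar1. unfold Rstar. simpl (0 <=? 1)%nat. simpl (1 <=? 1)%nat.
  rewrite Nat.sub_diag, Nat.sub_0_r, C_nn, C_n0, C_n0, !pow_O, pow_1.
  replace (S M - 1)%nat with M by lia. rewrite C_n0, Nat.sub_0_r. ring.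
Qed.

(* Every other admissible k with |k| = M+2 either has a zero amplitude factor from
   a transparent layer n >= 2 (k_n <> k~_n) or equals k*. *)
Lemma ampl_star_zero M l : (1 <= M)%nat -> length l = S M -> inL M (of_list l) = true ->
  ksum (of_list l) M = S (S M) -> l <> lstar M -> ampl M Rstar (of_list l) = 0.
Proof.
  intros HM Hl HL Hs Hne. set (k := of_list l) in *.
  destruct (classic (exists n, (2 <= n <= M)%nat /\ k n <> ktil M k n)) as [[n [Hn Hkn]]|Hno].
  - unfold ampl. cbv zeta. apply sumL_zero. intros bl Hbl. apply boxes_In in Hbl.
    destruct Hbl as [_ Hb]. apply (prodR_zero _ M n); [lia|]. cbv beta.
    specialize (Hb n ltac:(lia)). unfold of_list.
    set (b := nth n bl 0%nat) in *. set (kt := ktil M k n) in *.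
    assert (Rstar n = 0) by (unfold Rstar; destruct (Nat.leb_spec n 1); [lia|auto]).
    rewrite H, Ropp_0. destruct (Nat.eq_dec (kt - b) 0) as [E|E].
    + rewrite (pow_i (k n - b)) by lia. ring.
    + rewrite (pow_i (kt - b)) by lia. ring.
  - assert (Heq : forall n, (2 <= n <= M)%nat -> k n = ktil M k n)
      by (intros n Hn; apply NNPP; intro; apply Hno; exists n; auto).
    (* k_n = k~_n = k_{n+1} for 2 <= n <= M and k~_M = 0, so k vanishes on 2..M. *)
    assert (Hzero : forall j n, (M - n = j)%nat -> (2 <= n <= M)%nat -> k n = 0%nat).
    { induction j; intros n Hj Hn.
      - rewrite Heq by lia. unfold ktil. destruct (Nat.ltb_spec n M); [lia|auto].
      - rewrite Heq by lia. unfold ktil. destruct (Nat.ltb_spec n M); [|lia].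
        apply IHj; lia. }
    exfalso. apply Hne. apply inL_spec in HL. destruct HL as [H0 _].
    rewrite ksum_two in Hs by (try intros; try eapply Hzero; eauto; lia).
    apply (nth_ext _ _ 0%nat 0%nat). rewrite lstar_len; auto.
    intros n Hn. change (nth n l 0%nat) with (k n). change (nth n (lstar M) 0%nat) with (of_list (lstar M) n).
    destruct n as [|[|n]].
    + rewrite kstar0; auto.
    + rewrite kstar1; lia.
    + rewrite kstar2 by lia. eapply Hzero; eauto; lia.
Qed.

Lemma Q_star M : (1 <= M)%nat -> Qpoly M Rstar = (-(1/2)) ^ M * (1 - (1/2) ^ 2) * (1/2) ^ (S M).
Proof.
  intros HM. unfold Qpoly. rewrite (sumL_single _ _ (lstar M)).
  - assert (E : inL M (of_list (lstar M)) && (ksum (of_list (lstar M)) M =? S (S M))%nat = true).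
    { apply andb_true_iff. split.
      - apply inL_spec. split; auto. intros n Hn. destruct (Nat.eq_dec n 1).
        + subst. right. rewrite kstar0. lia.
        + left. apply kstar2. lia.
      - apply Nat.eqb_eq. rewrite ksum_two by (try intros; try apply kstar2; lia).
        rewrite kstar0, kstar1. lia. }
    rewrite E. apply ampl_star; auto.
  - apply boxes_NoDup.
  - apply boxes_In. split; [apply lstar_len; auto|]. intros i Hi.
    change (nth i (lstar M) 0%nat) with (of_list (lstar M) i).
    destruct i as [|[|i]]; [rewrite kstar0| rewrite kstar1 | rewrite kstar2]; lia.
  - intros y Hy Hne. apply boxes_In in Hy. destruct Hy as [Hl _].
    destruct (inL M (of_list y)) eqn:E1; [|reflexivity].
    destruct (Nat.eqb_spec (ksum (of_list y) M) (S (S M))); [|reflexivity].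
    simpl. apply ampl_star_zero; auto.
Qed.

Lemma P_star M : (1 <= M)%nat -> Ppoly M Rstar = (1 - (1/2)^2) * (1 - (1/2)^2).
Proof.
  intros HM. unfold Ppoly. rewrite prodR_two; auto.
  intros n Hn. unfold Rstar. destruct (Nat.leb_spec n 1); [lia|]. ring.
Qed.

Definition cont (d : nat) (f : rvec -> R) : Prop :=
  forall x eps, 0 < eps -> exists delta, 0 < delta /\
    forall y, (forall i, (i < d)%nat -> Rabs (y i - x i) < delta) -> Rabs (f y - f x) < eps.

Lemma cont_const d a : cont d (fun _ => a).
Proof. intros x eps He. exists 1. split; [lra|]. intros. rewrite Rminus_diag, Rabs_R0. auto. Qed.

Lemma cont_coord d i : (i < d)%nat -> cont d (fun y => y i).
Proof. intros Hi x eps He. exists eps. split; auto. Qed.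

Lemma cont_plus d f g : cont d f -> cont d g -> cont d (fun y => f y + g y).
Proof.
  intros Hf Hg x eps He. destruct (Hf x (eps/2)) as [d1 [Hd1 H1]]; [lra|].
  destruct (Hg x (eps/2)) as [d2 [Hd2 H2]]; [lra|].
  exists (Rmin d1 d2). split; [apply Rmin_glb_lt; auto|]. intros y Hy.
  assert (A1 := H1 y (fun i Hi => Rlt_le_trans _ _ _ (Hy i Hi) (Rmin_l _ _))).
  assert (A2 := H2 y (fun i Hi => Rlt_le_trans _ _ _ (Hy i Hi) (Rmin_r _ _))).
  replace (f y + g y - (f x + g x)) with ((f y - f x) + (g y - g x)) by ring.
  eapply Rle_lt_trans; [apply Rabs_triang|]. lra.
Qed.

Lemma cont_opp d f : cont d f -> cont d (fun y => - f y).
Proof.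
  intros Hf x eps He. destruct (Hf x eps He) as [d1 [Hd1 H1]]. exists d1. split; auto.
  intros y Hy. replace (- f y - - f x) with (- (f y - f x)) by ring. rewrite Rabs_Ropp. auto.
Qed.

Lemma cont_minus d f g : cont d f -> cont d g -> cont d (fun y => f y - g y).
Proof. intros Hf Hg. unfold Rminus. apply cont_plus; auto. apply cont_opp; auto. Qed.

(* Uses |fg(y) - fg(x)| <= |f(y) - f(x)| |g(y)| + |f(x)| |g(y) - g(x)|. *)
Lemma cont_mult d f g : cont d f -> cont d g -> cont d (fun y => f y * g y).
Proof.
  intros Hf Hg x eps He.
  set (A := Rabs (f x) + 1). set (B := Rabs (g x) + 1).
  assert (HA : 0 < A) by (unfold A; pose proof (Rabs_pos (f x)); lra).
  assert (HB : 0 < B) by (unfold B; pose proof (Rabs_pos (g x)); lra).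
  destruct (Hf x (eps / (2 * B))) as [d1 [Hd1 H1]]. { apply Rdiv_lt_0_compat; lra. }
  destruct (Hg x (Rmin 1 (eps / (2 * A)))) as [d2 [Hd2 H2]].
  { apply Rmin_glb_lt; [lra|]. apply Rdiv_lt_0_compat; lra. }
  exists (Rmin d1 d2). split; [apply Rmin_glb_lt; auto|]. intros y Hy.
  assert (A1 := H1 y (fun i Hi => Rlt_le_trans _ _ _ (Hy i Hi) (Rmin_l _ _))).
  assert (A2 := H2 y (fun i Hi => Rlt_le_trans _ _ _ (Hy i Hi) (Rmin_r _ _))).
  assert (A2a : Rabs (g y - g x) < 1) by (eapply Rlt_le_trans; [apply A2|apply Rmin_l]).
  assert (A2b : Rabs (g y - g x) < eps / (2 * A)) by (eapply Rlt_le_trans; [apply A2|apply Rmin_r]).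
  assert (Gy : Rabs (g y) < B).
  { unfold B. replace (g y) with (g x + (g y - g x)) by ring.
    eapply Rle_lt_trans; [apply Rabs_triang|]. lra. }
  replace (f y * g y - f x * g x) with ((f y - f x) * g y + f x * (g y - g x)) by ring.
  eapply Rle_lt_trans; [apply Rabs_triang|]. rewrite !Rabs_mult.
  assert (T1 : Rabs (f y - f x) * Rabs (g y) <= eps / (2 * B) * B).
  { apply Rmult_le_compat; try apply Rabs_pos; lra. }
  assert (T2 : Rabs (f x) * Rabs (g y - g x) <= Rabs (f x) * (eps / (2 * A))).
  { apply Rmult_le_compat_l; [apply Rabs_pos|lra]. }
  assert (T3 : Rabs (f x) * (eps / (2 * A)) < A * (eps / (2 * A))).
  { apply Rmult_lt_compat_r; [apply Rdiv_lt_0_compat; lra|]. unfold A; lra. }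
  replace (eps / (2 * B) * B) with (eps / 2) in T1 by (field; lra).
  replace (A * (eps / (2 * A))) with (eps / 2) in T3 by (field; lra).
  lra.
Qed.

Lemma cont_pow d f n : cont d f -> cont d (fun y => f y ^ n).
Proof.
  intros Hf. induction n as [|n IHn]; [apply (cont_const d 1)|].
  apply (cont_mult d f (fun y => f y ^ n)); auto.
Qed.

Lemma cont_sumL {A} d (g : A -> rvec -> R) l : (forall a, In a l -> cont d (g a)) ->
  cont d (fun y => sumL (fun a => g a y) l).
Proof.
  induction l; intros H. change (cont d (fun _ => 0)). apply cont_const.
  change (cont d (fun y => g a y + sumL (fun a => g a y) l)). apply cont_plus.
  apply H; left; auto. apply IHl; intros; apply H; right; auto.
Qed.

Lemma cont_prodR d (f : nat -> rvec -> R) N : (forall n, (n <= N)%nat -> cont d (f n)) ->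
  cont d (fun y => prodR (fun n => f n y) N).
Proof.
  induction N; intros H. apply H; lia.
  change (cont d (fun y => prodR (fun n => f n y) N * f (S N) y)). apply cont_mult.
  apply IHN; intros; apply H; lia. apply H; lia.
Qed.

Lemma cont_abs d f : cont d f -> cont d (fun y => Rabs (f y)).
Proof.
  intros Hf x eps He. destruct (Hf x eps He) as [delta [Hd H]]. exists delta. split; auto.
  intros y Hy. eapply Rle_lt_trans; [apply Rabs_triang_inv2|]. auto.
Qed.

Lemma cont_ampl M k : cont (S M) (fun y => ampl M y k).
Proof.
  unfold ampl. cbv zeta. apply cont_sumL. intros bl _. apply cont_prodR. intros n Hn.
  repeat apply cont_mult; try apply cont_const; repeat apply cont_pow;
    try (apply cont_opp; apply cont_coord; lia).
  apply cont_coord; lia. apply cont_minus. apply cont_const. apply cont_pow. apply cont_coord; lia.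
Qed.

Lemma cont_Q M : cont (S M) (Qpoly M).
Proof.
  unfold Qpoly. apply cont_sumL. intros l _. destruct (_ && _). apply cont_ampl. apply cont_const.
Qed.

Lemma cont_P M : cont (S M) (Ppoly M).
Proof.
  unfold Ppoly. apply (cont_prodR (S M) (fun n y => 1 - y n ^ 2)). intros n Hn.
  apply cont_minus. apply cont_const. apply cont_pow. apply cont_coord; lia.
Qed.


Lemma open_ext d G G' : (forall x, G x <-> G' x) -> Defs.open_set d G -> Defs.open_set d G'.
Proof.
  intros E HG x Hx. destruct (HG x (proj2 (E x) Hx)) as [delta [Hd H]].
  exists delta. split; auto. intros y Hy. apply E, H, Hy.
Qed.

Lemma open_pos d f : cont d f -> Defs.open_set d (fun x => 0 < f x).
Proof.
  intros Hf x Hx. destruct (Hf x (f x) Hx) as [delta [Hd H]]. exists delta. split; auto.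
  intros y Hy. specialize (H y Hy). apply Rabs_def2 in H. lra.
Qed.

Lemma open_and d G1 G2 : Defs.open_set d G1 -> Defs.open_set d G2 ->
  Defs.open_set d (fun x => G1 x /\ G2 x).
Proof.
  intros H1 H2 x [Hx1 Hx2].
  destruct (H1 x Hx1) as [d1 [Hd1 K1]]. destruct (H2 x Hx2) as [d2 [Hd2 K2]].
  exists (Rmin d1 d2). split; [apply Rmin_glb_lt; auto|]. intros y Hy. split.
  - apply K1. intros i Hi. eapply Rlt_le_trans; [apply Hy; auto|apply Rmin_l].
  - apply K2. intros i Hi. eapply Rlt_le_trans; [apply Hy; auto|apply Rmin_r].
Qed.

Lemma open_forall d n (G : nat -> rvec -> Prop) :
  (forall i, (i < n)%nat -> Defs.open_set d (G i)) ->
  Defs.open_set d (fun x => forall i, (i < n)%nat -> G i x).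
Proof.
  induction n as [|n IHn]; intros H.
  - intros x _. exists 1. split; [lra|]. intros; lia.
  - apply (open_ext d (fun x => (forall i, (i < n)%nat -> G i x) /\ G n x)).
    + intros x. split; [intros [Hl Hn] i Hi|intros Hx; split; intros; apply Hx; lia].
      destruct (Nat.eq_dec i n); [subst; auto|apply Hl; lia].
    + apply open_and; [apply IHn; intros; apply H|apply H]; lia.
Qed.

Definition Rset (M : nat) (c : R) : rvec -> Prop :=
  fun Rc : rvec =>
    (forall i, (i <= M)%nat -> -1 < Rc i < 1) /\
    exists r : R, -1 < r < 1 /\ r <> 0 /\
      same_data M (fun _ => c) Rc (S M) (fun _ => c) (extend M Rc r).

Lemma Ppoly_pos M x : (forall i, (i <= M)%nat -> -1 < x i < 1) -> 0 < Ppoly M x.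
Proof. intros H. apply prodR_pos. intros n Hn. specialize (H n Hn). simpl. nra. Qed.

Lemma solvable_in_unit_interval p q : 0 < p ->
  ((exists r, -1 < r < 1 /\ r <> 0 /\ r * p + q = 0) <-> (q <> 0 /\ Rabs q < p)).
Proof.
  intros Hp. split.
  - intros [r [Hr [Hr0 E]]]. replace q with (- r * p) by lra. split.
    + intro Z. apply Rmult_integral in Z. destruct Z; [apply Hr0|]; lra.
    + rewrite Rabs_mult, Rabs_Ropp, (Rabs_right p) by lra.
      assert (Rabs r < 1) by (apply Rabs_def1; lra). pose proof (Rabs_pos r). nra.
  - intros [Hq Hqp]. apply Rabs_def2 in Hqp. exists (- q / p).
    assert (E : - q / p * p = - q) by (field; lra).
    split; [|split; [|lra]].
    + split; apply (Rmult_lt_reg_r p); lra.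
    + intro Z. rewrite Z in E. lra.
Qed.

Lemma Rset_iff M c x : 0 < c -> (Rset M c x <->
  ((forall i, (i <= M)%nat -> -1 < x i < 1) /\ Qpoly M x <> 0 /\ Rabs (Qpoly M x) < Ppoly M x)).
Proof.
  intros Hc. unfold Rset. split; intros [Hcube H]; split; auto;
    rewrite <- (solvable_in_unit_interval _ _ (Ppoly_pos M x Hcube)) in *;
    destruct H as [r [Hr [Hr0 E]]]; exists r; (split; [|split]); auto;
    [apply same_data_iff in E| apply same_data_iff]; auto.
Qed.

(* Rset is a finite intersection of sets {f > 0} with f continuous. *)
Lemma Rset_open M c : 0 < c -> Defs.open_set (S M) (Rset M c).
Proof.
  intros Hc.
  apply (open_ext _ (fun x => (forall i, (i < S M)%nat -> 0 < 1 - x i ^ 2) /\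
                              0 < Rabs (Qpoly M x) /\ 0 < Ppoly M x - Rabs (Qpoly M x))).
  - intros x. rewrite Rset_iff by auto. split.
    + intros [Hcube [HQ HQP]]. split; [|split; [|lra]].
      * intros i Hi. specialize (Hcube i ltac:(lia)). simpl in Hcube. split; nra.
      * intro Z. rewrite Z, Rabs_R0 in HQ. lra.
    + intros [Hcube [HQ HQP]]. split; [|split; [apply Rabs_pos_lt; auto|lra]].
      intros i Hi. specialize (Hcube i ltac:(lia)). simpl. nra.
  - repeat apply open_and; try apply open_forall; intros; apply open_pos.
    + apply cont_minus; [apply cont_const|apply cont_pow, cont_coord; auto].
    + apply cont_abs, cont_Q.
    + apply cont_minus; [apply cont_P|apply cont_abs, cont_Q].
Qed.

Lemma pow_le1 x n : 0 <= x <= 1 -> 0 <= x ^ n <= 1.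
Proof. intros H. induction n; simpl; nra. Qed.

(* R* belongs to Rset: 0 < |Q(R* )| = (1/2)^M (3/4)(1/2)^(M+1) < (3/4)^2 = P(R* ). *)
Lemma Rstar_in M c : (1 <= M)%nat -> 0 < c -> Rset M c Rstar.
Proof.
  intros HM Hc. apply Rset_iff; auto. rewrite Q_star, P_star by auto. split; [|split].
  - intros i _. unfold Rstar. destruct (i <=? 1)%nat; lra.
  - repeat apply Rmult_integral_contrapositive_currified; try apply pow_nonzero; lra.
  - rewrite !Rabs_mult, <- !RPow_abs, Rabs_Ropp, Rabs_right by lra.
    rewrite (Rabs_right (1 - (1/2)^2)) by (simpl; lra).
    pose proof (pow_le1 (1/2) M ltac:(lra)). simpl ((1/2) ^ (S M)). simpl ((1/2)^2). nra.
Qed.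

Fixpoint sumN (f : nat -> R) (n : nat) : R := match n with O => 0 | S m => sumN f m + f m end.

Lemma sumN_plus f g n : sumN (fun j => f j + g j) n = sumN f n + sumN g n.
Proof. induction n; simpl; lra. Qed.

Lemma sumN_le f g n : (forall j, (j < n)%nat -> f j <= g j) -> sumN f n <= sumN g n.
Proof.
  induction n as [|n IHn]; intros H; simpl; [lra|].
  pose proof (H n ltac:(lia)). pose proof (IHn ltac:(intros; apply H; lia)). lra.
Qed.

Lemma sumN_nonneg f n : (forall j, (j < n)%nat -> 0 <= f j) -> 0 <= sumN f n.
Proof.
  induction n as [|n IHn]; intros H; simpl; [lra|].
  pose proof (H n ltac:(lia)). pose proof (IHn ltac:(intros; apply H; lia)). lra.
Qed.

Lemma sumN_term f n j : (forall k, (k < n)%nat -> 0 <= f k) -> (j < n)%nat -> f j <= sumN f n.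
Proof.
  induction n as [|n IHn]; intros H Hj; simpl; [lia|]. destruct (Nat.eq_dec j n).
  - subst. pose proof (sumN_nonneg f n ltac:(intros; apply H; lia)). lra.
  - pose proof (IHn ltac:(intros; apply H; lia) ltac:(lia)). pose proof (H n ltac:(lia)). lra.
Qed.

Lemma sumN_ext f g n : (forall j, (j < n)%nat -> f j = g j) -> sumN f n = sumN g n.
Proof. intros H. apply Rle_antisym; apply sumN_le; intros j Hj; rewrite H; lra || auto. Qed.

Lemma sumN_sum_f_R0 f n : sumN f (S n) = sum_f_R0 f n.
Proof. induction n as [|n IHn]; [simpl; lra|]. simpl in *. rewrite <- IHn. reflexivity. Qed.

Lemma sumN_geom e n : sumN (fun j => e / 2 ^ (S j)) n = e - e / 2 ^ n.
Proof.
  induction n as [|n IHn]; [simpl; field|].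
  change (sumN (fun j => e / 2 ^ (S j)) (S n)) with (sumN (fun j => e / 2 ^ (S j)) n + e / 2 ^ (S n)).
  rewrite IHn. simpl. field. apply pow_nonzero; lra.
Qed.

Lemma vol_nonneg d a b : 0 <= vol d a b.
Proof. induction d; simpl; [lra|]. apply Rmult_le_pos; auto. apply Rmax_l. Qed.

Lemma vol_ext d a b a' b' : (forall i, (i < d)%nat -> a i = a' i /\ b i = b' i) ->
  vol d a b = vol d a' b'.
Proof.
  induction d as [|d IHd]; intros H; simpl; auto. rewrite IHd by (intros; apply H; lia).
  destruct (H d ltac:(lia)) as [-> ->]. auto.
Qed.

Lemma vol_mono d a b a' b' : (forall i, (i < d)%nat -> a' i <= a i /\ b i <= b' i) ->
  vol d a b <= vol d a' b'.
Proof.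
  induction d as [|d IHd]; intros H; simpl; [lra|].
  apply Rmult_le_compat; try apply vol_nonneg; try apply Rmax_l.
  - apply IHd; intros; apply H; lia.
  - destruct (H d ltac:(lia)). unfold Rmax; repeat destruct Rle_dec; lra.
Qed.

Lemma vol_zero d a b i : (i < d)%nat -> b i <= a i -> vol d a b = 0.
Proof.
  induction d as [|d IHd]; intros Hi H; simpl; [lia|]. destruct (Nat.eq_dec i d).
  - subst. rewrite Rmax_left by lra. ring.
  - rewrite IHd by (auto; lia). ring.
Qed.

Lemma vol_pos d a b : (forall i, (i < d)%nat -> a i < b i) -> 0 < vol d a b.
Proof.
  induction d as [|d IHd]; intros H; simpl; [lra|]. apply Rmult_lt_0_compat.
  - apply IHd; intros; apply H; lia.
  - pose proof (H d ltac:(lia)). rewrite Rmax_right; lra.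
Qed.

Lemma vol_split d i a b a1 b1 a2 b2 : (i < d)%nat ->
  (forall j, j <> i -> a1 j = a j /\ b1 j = b j /\ a2 j = a j /\ b2 j = b j) ->
  Rmax 0 (b1 i - a1 i) + Rmax 0 (b2 i - a2 i) = Rmax 0 (b i - a i) ->
  vol d a1 b1 + vol d a2 b2 = vol d a b.
Proof.
  induction d as [|d IHd]; intros Hi H Hs; simpl; [lia|]. destruct (Nat.eq_dec i d).
  - subst. rewrite (vol_ext d a1 b1 a b), (vol_ext d a2 b2 a b)
      by (intros j Hj; destruct (H j ltac:(lia)) as [? [? [? ?]]]; auto).
    rewrite <- Hs. ring.
  - destruct (H d ltac:(lia)) as [-> [-> [-> ->]]]. rewrite <- (IHd ltac:(lia) H Hs). ring.
Qed.

Lemma cont_Rmax0 d f : cont d f -> cont d (fun y => Rmax 0 (f y)).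
Proof.
  intros Hf x eps He. destruct (Hf x eps He) as [delta [Hd H]]. exists delta. split; auto.
  intros y Hy. specialize (H y Hy). apply Rabs_def2 in H. apply Rabs_def1; unfold Rmax;
    repeat destruct Rle_dec; lra.
Qed.

Lemma cont_vol_enlarged d a b : cont 1 (fun y => vol d (fun i => a i - y O) (fun i => b i + y O)).
Proof.
  induction d as [|d IHd]; simpl; [apply cont_const|]. apply cont_mult; auto.
  apply cont_Rmax0, cont_minus; [apply cont_plus|apply cont_minus];
    solve [apply cont_const | apply cont_coord; lia].
Qed.

Lemma enlarge d a b eps : 0 < eps -> exists eta, 0 < eta /\
  vol d (fun i => a i - eta) (fun i => b i + eta) <= vol d a b + eps.
Proof.
  intros He. destruct (cont_vol_enlarged d a b (fun _ => 0) eps He) as [delta [Hd H]].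
  exists (delta / 2). split; [lra|].
  specialize (H (fun _ => delta / 2) ltac:(intros; rewrite Rminus_0_r, Rabs_right; lra)).
  rewrite (vol_ext d (fun i => a i - 0) (fun i => b i + 0) a b) in H by (intros; split; ring).
  apply Rabs_def2 in H. lra.
Qed.

(** Proof by induction on the number of faces of the covering boxes that cut
    the interior of the box: such a face splits the box into two halves with
    fewer cuts; without cuts, one covering box contains the whole box. *)

Definition upd (f : rvec) (i : nat) (v : R) : rvec := fun j => if Nat.eq_dec j i then v else f j.

Lemma in_box_mono d a b a' b' x : (forall i, (i < d)%nat -> a i <= a' i /\ b' i <= b i) ->
  in_box d a' b' x -> in_box d a b x.
Proof. intros H Hx i Hi. specialize (H i Hi). specialize (Hx i Hi). lra. Qed.

Definition inter (d : nat) (lo hi a b : rvec) : R :=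
  vol d (fun i => Rmax (a i) (lo i)) (fun i => Rmin (b i) (hi i)).

Fixpoint sumNat (f : nat -> nat) (n : nat) : nat :=
  match n with O => 0%nat | S m => (sumNat f m + f m)%nat end.

Lemma sumNat_le f g n : (forall k, (k < n)%nat -> (f k <= g k)%nat) -> (sumNat f n <= sumNat g n)%nat.
Proof.
  induction n as [|n IHn]; intros H; simpl; [lia|].
  pose proof (H n ltac:(lia)). pose proof (IHn ltac:(intros; apply H; lia)). lia.
Qed.

Lemma sumNat_lt f g n : (forall k, (k < n)%nat -> (f k <= g k)%nat) ->
  (exists k, (k < n)%nat /\ (f k < g k)%nat) -> (sumNat f n < sumNat g n)%nat.
Proof.
  induction n as [|n IHn]; intros H [k [Hk Hfg]]; simpl; [lia|].
  pose proof (sumNat_le f g n ltac:(intros; apply H; lia)). pose proof (H n ltac:(lia)).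
  destruct (Nat.eq_dec k n); [subst; lia|].
  pose proof (IHn ltac:(intros; apply H; lia) ltac:(exists k; split; auto; lia)). lia.
Qed.

Definition inside (a b p : R) : nat :=
  if Rlt_dec a p then if Rlt_dec p b then 1%nat else 0%nat else 0%nat.

Lemma inside_mono a b a' b' p : a <= a' -> b' <= b -> (inside a' b' p <= inside a b p)%nat.
Proof. intros. unfold inside. repeat destruct Rlt_dec; try lia; lra. Qed.

Lemma inside_one a b p : a < p < b -> inside a b p = 1%nat.
Proof. intros. unfold inside. repeat destruct Rlt_dec; try lia; lra. Qed.

Lemma inside_ends a b : inside a b a = 0%nat /\ inside a b b = 0%nat.
Proof. unfold inside. split; repeat destruct Rlt_dec; try lia; lra. Qed.

Definition cuts (d n : nat) (lo hi : nat -> rvec) (a b : rvec) : nat :=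
  sumNat (fun j => sumNat (fun i => inside (a i) (b i) (lo j i) + inside (a i) (b i) (hi j i))%nat d) n.

(* Without cuts, the covering box containing the centre contains the whole box. *)
Lemma cover_uncut d n lo hi a b :
  (forall j i, (j < n)%nat -> (i < d)%nat -> ~ (a i < lo j i < b i) /\ ~ (a i < hi j i < b i)) ->
  (forall x, in_box d a b x -> exists j, (j < n)%nat /\ in_box d (lo j) (hi j) x) ->
  vol d a b <= sumN (fun j => inter d (lo j) (hi j) a b) n.
Proof.
  intros Hno Hcov.
  assert (Hnn : forall j, (j < n)%nat -> 0 <= inter d (lo j) (hi j) a b) by (intros; apply vol_nonneg).
  destruct (classic (exists i, (i < d)%nat /\ b i <= a i)) as [[i [Hi Hba]]|Hall].
  { rewrite (vol_zero d a b i) by auto. apply sumN_nonneg; auto. }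
  assert (Hab : forall i, (i < d)%nat -> a i < b i)
    by (intros i Hi; apply Rnot_le_lt; intro; apply Hall; exists i; auto).
  destruct (Hcov (fun i => (a i + b i) / 2)) as [j [Hj Hin]].
  { intros i Hi. specialize (Hab i Hi). lra. }
  eapply Rle_trans; [|apply (sumN_term _ n j); auto].
  right. unfold inter. apply vol_ext. intros i Hi. specialize (Hin i Hi). specialize (Hab i Hi).
  destruct (Hno j i Hj Hi) as [N1 N2]. cbv beta in Hin.
  split; [rewrite Rmax_left|rewrite Rmin_left]; auto; apply Rnot_lt_le; intro.
  - apply N1. lra.
  - apply N2. lra.
Qed.

Lemma cuts_shrink d n lo hi a b a' b' j0 i0 : (j0 < n)%nat -> (i0 < d)%nat ->
  (forall i, (i < d)%nat -> a i <= a' i /\ b' i <= b i) ->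
  (inside (a' i0) (b' i0) (lo j0 i0) + inside (a' i0) (b' i0) (hi j0 i0) <
   inside (a i0) (b i0) (lo j0 i0) + inside (a i0) (b i0) (hi j0 i0))%nat ->
  (cuts d n lo hi a' b' < cuts d n lo hi a b)%nat.
Proof.
  intros Hj0 Hi0 Hab Hlt. unfold cuts.
  assert (Hle : forall j i, (i < d)%nat ->
    (inside (a' i) (b' i) (lo j i) + inside (a' i) (b' i) (hi j i) <=
     inside (a i) (b i) (lo j i) + inside (a i) (b i) (hi j i))%nat).
  { intros j i Hi. destruct (Hab i Hi) as [Y1 Y2].
    pose proof (inside_mono _ _ _ _ (lo j i) Y1 Y2). pose proof (inside_mono _ _ _ _ (hi j i) Y1 Y2). lia. }
  apply sumNat_lt.
  - intros k Hk. apply sumNat_le. intros; apply Hle; auto.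
  - exists j0. split; auto. apply sumNat_lt; [intros; apply Hle; auto|]. exists i0; auto.
Qed.

Lemma cuts_halves d n lo hi a b j0 i0 p : (j0 < n)%nat -> (i0 < d)%nat ->
  a i0 < p < b i0 -> p = lo j0 i0 \/ p = hi j0 i0 ->
  (cuts d n lo hi a (upd b i0 p) < cuts d n lo hi a b)%nat /\
  (cuts d n lo hi (upd a i0 p) b < cuts d n lo hi a b)%nat.
Proof.
  intros Hj0 Hi0 Hp Hpe.
  assert (Hin : inside (a i0) (b i0) p = 1%nat) by (apply inside_one; auto).
  destruct (inside_ends (a i0) p) as [_ E1]. destruct (inside_ends p (b i0)) as [E2 _].
  split; apply (cuts_shrink d n lo hi a b _ _ j0 i0); auto; unfold upd;
    try (intros i Hi; destruct (Nat.eq_dec i i0); [subst|]; split; lra);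
    destruct (Nat.eq_dec i0 i0) as [_|]; try contradiction;
    destruct Hpe as [<-|<-]; rewrite ?E1, ?E2, Hin.
  - pose proof (inside_mono (a i0) (b i0) (a i0) p (hi j0 i0) ltac:(lra) ltac:(lra)). lia.
  - pose proof (inside_mono (a i0) (b i0) (a i0) p (lo j0 i0) ltac:(lra) ltac:(lra)). lia.
  - pose proof (inside_mono (a i0) (b i0) p (b i0) (hi j0 i0) ltac:(lra) ltac:(lra)). lia.
  - pose proof (inside_mono (a i0) (b i0) p (b i0) (lo j0 i0) ltac:(lra) ltac:(lra)). lia.
Qed.

Lemma inter_halves d lo hi a b i0 p : (i0 < d)%nat -> a i0 <= p <= b i0 ->
  inter d lo hi a (upd b i0 p) + inter d lo hi (upd a i0 p) b = inter d lo hi a b.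
Proof.
  intros Hi0 Hp. unfold inter. apply (vol_split d i0); auto; unfold upd.
  - intros j Hj. destruct (Nat.eq_dec j i0); [contradiction|]. auto.
  - destruct (Nat.eq_dec i0 i0); [|contradiction]. unfold Rmax, Rmin. repeat destruct Rle_dec; lra.
Qed.

Lemma vol_halves d a b i0 p : (i0 < d)%nat -> a i0 <= p <= b i0 ->
  vol d a (upd b i0 p) + vol d (upd a i0 p) b = vol d a b.
Proof.
  intros Hi0 Hp. apply (vol_split d i0); auto; unfold upd.
  - intros j Hj. destruct (Nat.eq_dec j i0); [contradiction|]. auto.
  - destruct (Nat.eq_dec i0 i0); [|contradiction]. unfold Rmax. repeat destruct Rle_dec; lra.
Qed.

Lemma finite_cover_vol d n lo hi a b :
  (forall x, in_box d a b x -> exists j, (j < n)%nat /\ in_box d (lo j) (hi j) x) ->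
  vol d a b <= sumN (fun j => inter d (lo j) (hi j) a b) n.
Proof.
  remember (cuts d n lo hi a b) as m eqn:Hm. assert (Hle : (cuts d n lo hi a b <= m)%nat) by lia.
  clear Hm. revert a b Hle. induction m as [m IHm] using lt_wf_ind. intros a b Hle Hcov.
  destruct (classic (exists j i p, (j < n)%nat /\ (i < d)%nat /\ a i < p < b i /\
                                   (p = lo j i \/ p = hi j i))) as [[j0 [i0 [p [Hj0 [Hi0 [Hp Hpe]]]]]]|Hno].
  - destruct (cuts_halves d n lo hi a b j0 i0 p Hj0 Hi0 Hp Hpe) as [C1 C2].
    assert (I1 := IHm _ (Nat.lt_le_trans _ _ _ C1 Hle) a (upd b i0 p) (le_n _)).
    assert (I2 := IHm _ (Nat.lt_le_trans _ _ _ C2 Hle) (upd a i0 p) b (le_n _)).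
    rewrite <- (vol_halves d a b i0 p) by (auto; lra).
    rewrite <- (sumN_ext (fun j => inter d (lo j) (hi j) a (upd b i0 p) +
                                   inter d (lo j) (hi j) (upd a i0 p) b))
      by (intros; apply inter_halves; auto; lra).
    rewrite sumN_plus. apply Rplus_le_compat; [apply I1|apply I2]; intros x Hx; apply Hcov;
      revert Hx; apply in_box_mono; intros i Hi; unfold upd;
      destruct (Nat.eq_dec i i0); subst; lra.
  - apply cover_uncut; auto. intros j i Hj Hi. split; intro; apply Hno; exists j, i; eauto 6.
Qed.

Fixpoint toTn (d : nat) (x : rvec) : Compactness.Tn d R :=
  match d with O => tt | S d' => (x O, toTn d' (fun i => x (S i))) end.

Fixpoint ofTn (d : nat) : Compactness.Tn d R -> rvec :=
  match d with
  | O => fun _ _ => 0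
  | S d' => fun t i => match i with O => fst t | S i' => ofTn d' (snd t) i' end
  end.

Lemma toTn_ofTn d t : toTn d (ofTn d t) = t.
Proof. induction d as [|d IHd]; destruct t; simpl; [reflexivity|]. f_equal. apply IHd. Qed.

Lemma bounded_toTn d a b x :
  Compactness.bounded_n d (toTn d a) (toTn d b) (toTn d x) <-> in_box d a b x.
Proof.
  revert a b x. induction d as [|d IHd]; intros a b x; simpl.
  - split; [intros _ i Hi; lia|auto].
  - rewrite IHd. split.
    + intros [H0 H] [|i] Hi; [auto|apply (H i); lia].
    + intros H. split; [apply H; lia|intros i Hi; apply (H (S i)); lia].
Qed.

Lemma close_toTn d e x y :
  Compactness.close_n d e (toTn d x) (toTn d y) <-> forall i, (i < d)%nat -> Rabs (x i - y i) < e.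
Proof.
  revert x y. induction d as [|d IHd]; intros x y; simpl.
  - split; [intros _ i Hi; lia|auto].
  - rewrite IHd. split.
    + intros [H0 H] [|i] Hi; [auto|apply (H i); lia].
    + intros H. split; [apply H; lia|intros i Hi; apply (H (S i)); lia].
Qed.

Lemma box_finite_subcover d a b (U : nat -> rvec -> Prop) :
  (forall x, in_box d a b x -> exists j delta, 0 < delta /\
     forall y, (forall i, (i < d)%nat -> Rabs (y i - x i) < delta) -> U j y) ->
  exists n, forall x, in_box d a b x -> exists j, (j < n)%nat /\ U j x.
Proof.
  intros Hloc.
  assert (Hsel : forall x, {p : nat * posreal | in_box d a b x ->
            forall y, (forall i, (i < d)%nat -> Rabs (y i - x i) < snd p) -> U (fst p) y}).
  { intros x. apply constructive_indefinite_description.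
    destruct (classic (in_box d a b x)) as [Hx|Hx].
    - destruct (Hloc x Hx) as [j [delta [Hd H]]]. exists (j, mkposreal delta Hd). auto.
    - exists (0%nat, mkposreal 1 Rlt_0_1). intros; contradiction. }
  set (idx := fun t => fst (proj1_sig (Hsel (ofTn d t)))).
  apply NNPP. intro Hn.
  apply (Compactness.compactness_list d (toTn d a) (toTn d b) (fun t => snd (proj1_sig (Hsel (ofTn d t))))).
  intros [l Hl]. apply Hn. exists (S (list_max (map idx l))). intros x Hx.
  destruct (Hl (toTn d x)) as [t [Ht [Hbt Hct]]]; [apply bounded_toTn; auto|].
  rewrite <- (toTn_ofTn d t) in Hbt. apply bounded_toTn in Hbt.
  assert (Hclose := Hct). rewrite <- (toTn_ofTn d t) in Hclose at 2.
  pose proof (proj1 (close_toTn d _ x (ofTn d t)) Hclose) as Hnear.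
  exists (idx t). split.
  - assert (Hmax : Forall (fun k => (k <= list_max (map idx l))%nat) (map idx l))
      by (apply list_max_le; lia).
    rewrite Forall_forall in Hmax. specialize (Hmax (idx t) (in_map idx l t Ht)). lia.
  - apply (proj2_sig (Hsel (ofTn d t)) Hbt). exact Hnear.
Qed.

Lemma enlarge_cover d (lo hi : nat -> rvec) s eps : 0 < eps ->
  (forall n, sum_f_R0 (fun j => vol d (lo j) (hi j)) n <= s) ->
  exists eta : nat -> R, (forall j, 0 < eta j) /\ forall n,
    sumN (fun j => vol d (fun i => lo j i - eta j) (fun i => hi j i + eta j)) n <= s + eps.
Proof.
  intros He Hs.
  assert (Heta : forall j, {e | 0 < e /\ vol d (fun i => lo j i - e) (fun i => hi j i + e)
                                           <= vol d (lo j) (hi j) + eps / 2 ^ (S j)}).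
  { intro j. apply constructive_indefinite_description, enlarge.
    apply Rdiv_lt_0_compat; auto. apply pow_lt; lra. }
  exists (fun j => proj1_sig (Heta j)). split; [intros j; apply (proj2_sig (Heta j))|]. intros n.
  eapply Rle_trans; [apply sumN_le; intros j _; apply (proj2_sig (Heta j))|].
  rewrite sumN_plus.
  assert (Hgeom : sumN (fun j => eps / 2 ^ (S j)) n <= eps).
  { rewrite sumN_geom. assert (0 < eps / 2 ^ n) by (apply Rdiv_lt_0_compat; [lra|apply pow_lt; lra]).
    lra. }
  assert (Hvol : sumN (fun j => vol d (lo j) (hi j)) n <= s).
  { destruct n as [|n]; [|rewrite sumN_sum_f_R0; apply Hs].
    specialize (Hs 0%nat). pose proof (vol_nonneg d (lo 0%nat) (hi 0%nat)). simpl in *. lra. }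
  lra.
Qed.

Lemma box_not_null d a b S : (forall i, a i < b i) -> (forall x, in_box d a b x -> S x) ->
  ~ null_set d S.
Proof.
  intros Hab HS Hnull.
  assert (HV : 0 < vol d a b) by (apply vol_pos; intros; apply Hab).
  destruct (Hnull _ HV) as [lo [hi [Hcov [s [Hs Hsum]]]]].
  destruct (enlarge_cover d lo hi s ((vol d a b - s) / 2) ltac:(lra) Hsum) as [eta [Heta Hbig]].
  set (lo' := fun j i => lo j i - eta j). set (hi' := fun j i => hi j i + eta j).
  destruct (box_finite_subcover d a b (fun j => in_box d (lo' j) (hi' j))) as [n Hn].
  { intros x Hx. destruct (Hcov x (HS x Hx)) as [j Hj]. exists j, (eta j). split; auto.
    intros y Hy i Hi. specialize (Hj i Hi). specialize (Hy i Hi). apply Rabs_def2 in Hy.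
    unfold lo', hi'. lra. }
  pose proof (finite_cover_vol d n lo' hi' a b Hn) as Hfin.
  assert (Hinter : sumN (fun j => inter d (lo' j) (hi' j) a b) n <= sumN (fun j => vol d (lo' j) (hi' j)) n).
  { apply sumN_le. intros j _. apply vol_mono. intros i _. split; [apply Rmax_r|apply Rmin_r]. }
  assert (Hsmall : sumN (fun j => vol d (lo' j) (hi' j)) n <= s + (vol d a b - s) / 2) by exact (Hbig n).
  lra.
Qed.

Lemma open_measurable d G : (1 <= d)%nat -> Defs.open_set d G -> lebesgue_measurable d G.
Proof.
  intros Hd HG eps He. exists G. split; auto. split; auto.
  exists (fun _ _ => 0), (fun _ _ => 0). split.
  - intros x [Gx nGx]. contradiction.
  - exists 0. split; auto. intros n. right. apply sum_eq_R0. intros.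
    apply (vol_zero d _ _ 0%nat); auto. lra.
Qed.

Theorem theorem3p2 (M : nat) (c : R) (hM : (1 <= M)%nat) (hc : 0 < c) :
  positive_measure (S M)
    (fun Rc : rvec =>
       (forall i, (i <= M)%nat -> -1 < Rc i < 1) /\
       exists r : R, -1 < r < 1 /\ r <> 0 /\
         same_data M (fun _ => c) Rc (S M) (fun _ => c) (extend M Rc r)).
Proof.
  change (positive_measure (S M) (Rset M c)). split.
  - apply open_measurable; [lia|]. apply Rset_open; auto.
  - (* R* lies in the open set Rset, hence so does a box of positive volume around it. *)
    destruct (Rset_open M c hc Rstar (Rstar_in M c hM hc)) as [delta [Hdelta Hball]].
    apply (box_not_null (S M) (fun i => Rstar i - delta / 2) (fun i => Rstar i + delta / 2)).
    + intros; lra.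
    + intros x Hx. apply Hball. intros i Hi. specialize (Hx i Hi). apply Rabs_def1; lra.
Qed.
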